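(* Let $A,B$ be partially ordered sets, let $G,G'$ be passable games over $A$, and let $H,H'$ be passable games over $B$. Then (a) $G\lhd G'$ and $H\le H'$ imply $G+H\lhd G'+H'$; (b) $G\le G'$ and $H\lhd H'$ imply $G+H\lhd G'+H'$; (c) $G\le G'$ and $H\le H'$ imply $G+H\le G'+H'$. In particular, if $G\equiv G'$ and $H\equiv H'$, then $G+H\equiv G'+H'$.
   Context: Games over a poset $A$ are defined inductively: for each $a\in A$ there is an atomic game $[a]$, which has no options; and if $L$ and $R$ are non-empty sets of games, then $\{L\mid R\}$ is a composite game with left options $L$ and right options $R$. The relations $\le$ and $\lhd$ are defined by simultaneous recursion: $G\le H$ iff (1) every left option $G^L$ of $G$ satisfies $G^L\lhd H$, (2) every right option $H^R$ of $H$ satisfies $G\lhd H^R$, and (3) if $G$ or $H$ is atomic then $G\lhd H$; and $G\lhd H$ iff (1) some right option $G^R$ of $G$ satisfies $G^R\le H$, or (2) some left option $H^L$ of $H$ satisfies $G\le H^L$, or (3) $G=[a]$, $H=[b]$ are atomic and $a\le b$. $G\equiv H$ means $G\le H$ and $H\le G$. A game $G$ is passable if $G\lhd G$ and recursively all its options are passable. For a game $G$ over $A$ and $H$ over $B$, the sum $G+H$ is the game over $A\times B$ (componentwise order) defined recursively by $[a]+[b]=[(a,b)]$ when both are atomic, and otherwise $G+H=\{G^L+H,\,G+H^L\mid G^R+H,\,G+H^R\}$, where $G^L,G^R,H^L,H^R$ range over the options of $G$ and $H$ (atomic games contributing no options). *)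

From mathcomp Require Import all_boot all_order.
Set Implicit Arguments. Unset Strict Implicit. Unset Printing Implicit Defensive.

Inductive game (A : Type) : Type :=
| Atom : A -> game A
| Comp : forall (IL IR : Type), inhabited IL -> inhabited IR ->
         (IL -> game A) -> (IR -> game A) -> game A.

Arguments Atom {A} _.
Arguments Comp {A IL IR} _ _ _ _.

Section Rel.
Variables (A : Type) (leA : A -> A -> bool).

(* Simultaneous recursion: game_rel G H = (G <= H, G <| H). *)
Fixpoint game_rel (G : game A) : game A -> Prop * Prop :=
  fix game_rel' (H : game A) : Prop * Prop :=
    let lhd :=
      (match G with
       | Comp _ _ _ _ _ GR => exists j, (game_rel (GR j) H).1
       | Atom _ => False end)
      \/ (match H with
          | Comp _ _ _ _ HL _ => exists i, (game_rel' (HL i)).1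
          | Atom _ => False end)
      \/ (match G, H with
          | Atom a, Atom b => leA a b
          | _, _ => False end) in
    let le :=
      (match G with
       | Comp _ _ _ _ GL _ => forall i, (game_rel (GL i) H).2
       | Atom _ => True end)
      /\ (match H with
          | Comp _ _ _ _ _ HR => forall j, (game_rel' (HR j)).2
          | Atom _ => True end)
      /\ ((match G with Atom _ => True | _ => False end
           \/ match H with Atom _ => True | _ => False end) -> lhd) in
    (le, lhd).

Definition gle (G H : game A) : Prop := (game_rel G H).1.
Definition glhd (G H : game A) : Prop := (game_rel G H).2.
Definition gequiv (G H : game A) : Prop := gle G H /\ gle H G.

Fixpoint passable (G : game A) : Prop :=
  glhd G G /\
  match G with
  | Atom _ => True
  | Comp _ _ _ _ GL GR => (forall i, passable (GL i)) /\ (forall j, passable (GR j))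
  end.
End Rel.

Definition inh_inl (X Y : Type) (h : inhabited X) : inhabited (X + Y) :=
  match h with inhabits x => inhabits (inl x) end.

Fixpoint gsum (A B : Type) (G : game A) : game B -> game (A * B) :=
  fix gsum' (H : game B) : game (A * B) :=
    match G, H with
    | Atom a, Atom b => Atom (a, b)
    | Atom _, Comp _ _ hL hR HL HR =>
        Comp hL hR (fun i => gsum' (HL i)) (fun j => gsum' (HR j))
    | Comp _ _ hL hR GL GR, Atom _ =>
        Comp hL hR (fun i => gsum (GL i) H) (fun j => gsum (GR j) H)
    | Comp ILG IRG hL hR GL GR, Comp ILH IRH _ _ HL HR =>
        Comp (inh_inl ILH hL) (inh_inl IRH hR)
          (fun i => match i with inl i => gsum (GL i) H | inr i => gsum' (HL i) end)
          (fun j => match j with inl j => gsum (GR j) H | inr j => gsum' (HR j) end)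
    end.

Definition prod_le (dA dB : Order.disp_t) (A : porderType dA) (B : porderType dB)
  (p q : A * B) : bool := ((p.1 <= q.1)%O && (p.2 <= q.2)%O).

(* For sums, a move witnessing G <| G' (or H <| H') is the same move in the
   sum, and G + H <= G' + H' reduces to parts (a) and (b) on options.  The one
   case with no move to transport is G <| G' between atoms a <= a'; there
   passability gives H <| H <= H', hence H <| H', and its witness is used
   instead (symmetrically in (b), through G <= G' <| G'). *)

From mathcomp Require Import all_boot all_order.

Set Implicit Arguments.
Unset Strict Implicit.
Unset Printing Implicit Defensive.

Section Options.
Variable A : Type.
Implicit Types G H X Y : game A.

Definition left_option X G : Prop :=
  if G is Comp _ _ _ _ GL _ then exists i, X = GL i else False.

Definition right_option X G : Prop :=
  if G is Comp _ _ _ _ _ GR then exists j, X = GR j else False.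

Definition option_of X G : Prop := left_option X G \/ right_option X G.

Definition is_atom G : Prop := if G is Atom _ then True else False.

Lemma option_of_wf : well_founded option_of.
Proof.
elim=> [a | IL IR hL hR GL IHL GR IHR]; constructor=> X; first by case.
by case=> -[i ->]; [apply: IHL | apply: IHR].
Qed.

End Options.

Section Relations.
Variables (A : Type) (le : rel A).
Implicit Types G H X Y : game A.

Lemma gleP G H :
  gle le G H <->
  [/\ forall X, left_option X G -> glhd le X H,
      forall Y, right_option Y H -> glhd le G Y
    & is_atom G \/ is_atom H -> glhd le G H].
Proof.
case: G => [a | IL IR hL hR GL GR]; case: H => [b | JL JR kL kR HL HR].
all: split=> [[GL_H [HR_G atom_GH]] | [GL_H HR_G atom_GH]].
- by split=> [X [] | Y [] |].
- by do 2!split.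
- by split=> [X [] | Y [j ->] |] //; exact: HR_G.
- by split=> //; split=> // j; apply: HR_G; exists j.
- by split=> [X [i ->] | Y [] |] //; exact: GL_H.
- by split=> [i|]; [apply: GL_H; exists i | split].
- by split=> [X [i ->] | Y [j ->] | []] //; [exact: GL_H | exact: HR_G].
- split=> [i|]; first by apply: GL_H; exists i.
  by split=> [j | []] //; apply: HR_G; exists j.
Qed.

Variant glhd_spec G H : Prop :=
  | GlhdRight X of right_option X G & gle le X H
  | GlhdLeft Y of left_option Y H & gle le G Y
  | GlhdAtom a b of G = Atom a & H = Atom b & le a b.

Lemma glhdP G H : glhd le G H <-> glhd_spec G H.
Proof.
split; last first.
  case=> [X XG XH | Y YH GY | a b -> -> ab]; last by right; right.
    case: G XG XH => // IL IR hL hR GL GR [j ->] XH.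
    by case: H XH => [b | JL JR kL kR HL HR] XH; left; exists j.
  case: H YH GY => // JL JR kL kR HL HR [i ->] GY.
  by case: G GY => [a | IL IR hL hR GL GR] GY; right; left; exists i.
case: G => [a | IL IR hL hR GL GR]; case: H => [b | JL JR kL kR HL HR].
all: case=> [GR_H | [G_HL | ab]]; try by [].
all: try by case: GR_H => j XH; apply: (GlhdRight (X := GR j)) => //; exists j.
all: try by case: G_HL => i GY; apply: (GlhdLeft (Y := HL i)) => //; exists i.
exact: GlhdAtom ab.
Qed.

Lemma gle_atoms (a b : A) : le a b -> gle le (Atom a) (Atom b).
Proof.
by move=> ab; apply/gleP; split=> [X [] | Y [] | _]; apply/glhdP; exact: GlhdAtom ab.
Qed.

End Relations.

Section Passable.
Variables (A : Type) (le : rel A).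
Implicit Types G X : game A.

Lemma passable_lhd G : passable le G -> glhd le G G.
Proof. by case: G => [a | IL IR hL hR GL GR] []. Qed.

Lemma passable_option X G : option_of X G -> passable le G -> passable le X.
Proof.
case: G => [a | IL IR hL hR GL GR] [] //= [k ->] [_ [pGL pGR]]; [exact: pGL | exact: pGR].
Qed.

End Passable.

Section Transitivity.
Variables (A : Type) (le : rel A).
Hypothesis le_tr : transitive le.

Record trans_at (G H K : game A) : Prop := TransAt {
  trans_le_le : gle le G H -> gle le H K -> gle le G K;
  trans_lhd_le : glhd le G H -> gle le H K -> glhd le G K;
  trans_le_lhd : gle le G H -> glhd le H K -> glhd le G K }.

Section Step.
Variables G H K : game A.
Hypothesis IHG : forall X, option_of X G -> trans_at X H K.
Hypothesis IHH : forall Y, option_of Y H -> trans_at G Y K.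
Hypothesis IHK : forall Z, option_of Z K -> trans_at G H Z.

Lemma trans_lhd_le_step : glhd le G H -> gle le H K -> glhd le G K.
Proof.
case/glhdP=> [X XG XH | Y YH GY | a b eG eH ab] HK.
- apply/glhdP; apply: (GlhdRight XG).
  exact: trans_le_le (IHG (or_intror XG)) XH HK.
- case/gleP: HK => YK _ _.
  exact: trans_le_lhd (IHH (or_introl YH)) GY (YK Y YH).
- have: glhd le H K by case/gleP: HK => _ _; apply; left; rewrite eH.
  case/glhdP=> [X XH _ | Z ZK HZ | b' c eH' eK bc].
  + by rewrite eH in XH.
  + apply/glhdP; apply: (GlhdLeft ZK).
    by apply: trans_le_le (IHK (or_introl ZK)) _ HZ; rewrite eG eH; exact: gle_atoms.
  + move: eH' bc; rewrite eH => -[<-] bc.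
    by apply/glhdP; exact: GlhdAtom eG eK (le_tr ab bc).
Qed.

Lemma trans_le_lhd_step : gle le G H -> glhd le H K -> glhd le G K.
Proof.
move=> GH; case/glhdP=> [X XH XK | Z ZK HZ | b c eH eK bc].
- case/gleP: GH => _ GX _.
  exact: trans_lhd_le (IHH (or_intror XH)) (GX X XH) XK.
- apply/glhdP; apply: (GlhdLeft ZK).
  exact: trans_le_le (IHK (or_introl ZK)) GH HZ.
- have: glhd le G H by case/gleP: GH => _ _; apply; right; rewrite eH.
  case/glhdP=> [X XG XH | Y YH _ | a b' eG eH' ab].
  + apply/glhdP; apply: (GlhdRight XG).
    by apply: trans_le_le (IHG (or_intror XG)) XH _; rewrite eH eK; exact: gle_atoms.
  + by rewrite eH in YH.
  + move: eH' ab; rewrite eH => -[<-] ab.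
    by apply/glhdP; exact: GlhdAtom eG eK (le_tr ab bc).
Qed.

Lemma trans_le_le_step : gle le G H -> gle le H K -> gle le G K.
Proof.
move=> GH HK; apply/gleP; split=> [X XG | Z ZK | [atomG | atomK]].
- case/gleP: GH => XH _ _.
  exact: trans_lhd_le (IHG (or_introl XG)) (XH X XG) HK.
- case/gleP: HK => _ HZ _.
  exact: trans_le_lhd (IHK (or_intror ZK)) GH (HZ Z ZK).
- by apply: trans_lhd_le_step HK; case/gleP: GH => _ _; apply; left.
- by apply: trans_le_lhd_step GH _; case/gleP: HK => _ _; apply; right.
Qed.

Lemma trans_step : trans_at G H K.
Proof. exact: TransAt trans_le_le_step trans_lhd_le_step trans_le_lhd_step. Qed.

End Step.

Lemma game_trans G H K : trans_at G H K.
Proof.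
move: H K; elim/(well_founded_ind (@option_of_wf A)): G => G IHG H K.
move: K; elim/(well_founded_ind (@option_of_wf A)): H => H IHH K.
elim/(well_founded_ind (@option_of_wf A)): K => K IHK.
exact: trans_step (fun X XG => IHG X XG H K) (fun Y YH => IHH Y YH K) IHK.
Qed.

Lemma glhd_gle_trans G H K : glhd le G H -> gle le H K -> glhd le G K.
Proof. exact: trans_lhd_le (game_trans G H K). Qed.

Lemma gle_glhd_trans G H K : gle le G H -> glhd le H K -> glhd le G K.
Proof. exact: trans_le_lhd (game_trans G H K). Qed.

End Transitivity.

Section SumOptions.
Variables (A B : Type).
Implicit Types (G X : game A) (H Y : game B).

Lemma left_option_gsumL X G H : left_option X G -> left_option (gsum X H) (gsum G H).
Proof.
case: G => // IL IR hL hR GL GR [i ->].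
by case: H => [b | JL JR kL kR HL HR]; [exists i | exists (inl i)].
Qed.

Lemma left_option_gsumR Y G H : left_option Y H -> left_option (gsum G Y) (gsum G H).
Proof.
case: H => // JL JR kL kR HL HR [i ->].
by case: G => [a | IL IR hL hR GL GR]; [exists i | exists (inr i)].
Qed.

Lemma right_option_gsumL X G H : right_option X G -> right_option (gsum X H) (gsum G H).
Proof.
case: G => // IL IR hL hR GL GR [j ->].
by case: H => [b | JL JR kL kR HL HR]; [exists j | exists (inl j)].
Qed.

Lemma right_option_gsumR Y G H : right_option Y H -> right_option (gsum G Y) (gsum G H).
Proof.
case: H => // JL JR kL kR HL HR [j ->].
by case: G => [a | IL IR hL hR GL GR]; [exists j | exists (inr j)].
Qed.

Lemma left_option_gsum Z G H :
  left_option Z (gsum G H) ->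
  (exists2 X, left_option X G & Z = gsum X H) \/
  (exists2 Y, left_option Y H & Z = gsum G Y).
Proof.
case: G => [a | IL IR hL hR GL GR]; case: H => [b | JL JR kL kR HL HR] //= [i ->].
- by right; exists (HL i) => //; exists i.
- by left; exists (GL i) => //; exists i.
- by case: i => i; [left; exists (GL i) | right; exists (HL i)] => //; exists i.
Qed.

Lemma right_option_gsum Z G H :
  right_option Z (gsum G H) ->
  (exists2 X, right_option X G & Z = gsum X H) \/
  (exists2 Y, right_option Y H & Z = gsum G Y).
Proof.
case: G => [a | IL IR hL hR GL GR]; case: H => [b | JL JR kL kR HL HR] //= [j ->].
- by right; exists (HR j) => //; exists j.
- by left; exists (GR j) => //; exists j.
- by case: j => j; [left; exists (GR j) | right; exists (HR j)] => //; exists j.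
Qed.

Lemma is_atom_gsum G H : is_atom (gsum G H) -> is_atom G /\ is_atom H.
Proof. by case: G => [a | IL IR hL hR GL GR]; case: H. Qed.

End SumOptions.

Section Sum.
Variables (A B : Type) (leA : rel A) (leB : rel B) (leAB : rel (A * B)).
Hypotheses (leA_tr : transitive leA) (leB_tr : transitive leB).
Hypothesis leAB_mono :
  forall a a' b b', leA a a' -> leB b b' -> leAB (a, b) (a', b').

Lemma gsum_atoms_lhd a a' b b' :
  leA a a' -> leB b b' ->
  glhd leAB (gsum (Atom a) (Atom b)) (gsum (Atom a') (Atom b')).
Proof.
by move=> aa' bb'; apply/glhdP; exact: GlhdAtom erefl erefl (leAB_mono aa' bb').
Qed.

Record sum_monotone_at (G G' : game A) (H H' : game B) : Prop := SumMonotoneAt {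
  sum_lhd_le : glhd leA G G' -> gle leB H H' -> glhd leAB (gsum G H) (gsum G' H');
  sum_le_lhd : gle leA G G' -> glhd leB H H' -> glhd leAB (gsum G H) (gsum G' H');
  sum_le_le : gle leA G G' -> gle leB H H' -> gle leAB (gsum G H) (gsum G' H') }.

Section Step.
Variables (G G' : game A) (H H' : game B).
Hypotheses (lhd_G'G' : glhd leA G' G') (lhd_HH : glhd leB H H).
Hypothesis IHG : forall X, option_of X G -> sum_monotone_at X G' H H'.
Hypothesis IHG' : forall X, option_of X G' -> sum_monotone_at G X H H'.
Hypothesis IHH : forall Y, option_of Y H -> sum_monotone_at G G' Y H'.
Hypothesis IHH' : forall Y, option_of Y H' -> sum_monotone_at G G' H Y.

Lemma sum_lhd_of_lhdG :
  glhd leA G G' -> gle leB H H' ->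
  (forall a a', G = Atom a -> G' = Atom a' -> leA a a' ->
     glhd leAB (gsum G H) (gsum G' H')) ->
  glhd leAB (gsum G H) (gsum G' H').
Proof.
move=> lhd_GG' le_HH' atoms.
case/glhdP: lhd_GG' => [X XG XG' | X XG' GX | a a' eG eG' aa'].
- apply/glhdP; apply: (GlhdRight (right_option_gsumL H XG)).
  exact: sum_le_le (IHG (or_intror XG)) XG' le_HH'.
- apply/glhdP; apply: (GlhdLeft (left_option_gsumL H' XG')).
  exact: sum_le_le (IHG' (or_introl XG')) GX le_HH'.
- exact: atoms eG eG' aa'.
Qed.

Lemma sum_lhd_of_lhdH :
  gle leA G G' -> glhd leB H H' ->
  (forall b b', H = Atom b -> H' = Atom b' -> leB b b' ->
     glhd leAB (gsum G H) (gsum G' H')) ->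
  glhd leAB (gsum G H) (gsum G' H').
Proof.
move=> le_GG' lhd_HH' atoms.
case/glhdP: lhd_HH' => [Y YH YH' | Y YH' HY | b b' eH eH' bb'].
- apply/glhdP; apply: (GlhdRight (right_option_gsumR G YH)).
  exact: sum_le_le (IHH (or_intror YH)) le_GG' YH'.
- apply/glhdP; apply: (GlhdLeft (left_option_gsumR G' YH')).
  exact: sum_le_le (IHH' (or_introl YH')) le_GG' HY.
- exact: atoms eH eH' bb'.
Qed.

Lemma sum_lhd_le_step :
  glhd leA G G' -> gle leB H H' -> glhd leAB (gsum G H) (gsum G' H').
Proof.
move=> lhd_GG' le_HH'; have lhd_HH' := glhd_gle_trans leB_tr lhd_HH le_HH'.
apply: sum_lhd_of_lhdG lhd_GG' le_HH' _ => a a' eG eG' aa'.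
apply: sum_lhd_of_lhdH lhd_HH' _ => [|b b' eH eH' bb'].
  by rewrite eG eG'; exact: gle_atoms.
by rewrite eG eG' eH eH'; exact: gsum_atoms_lhd.
Qed.

Lemma sum_le_lhd_step :
  gle leA G G' -> glhd leB H H' -> glhd leAB (gsum G H) (gsum G' H').
Proof.
move=> le_GG' lhd_HH'; have lhd_GG' := gle_glhd_trans leA_tr le_GG' lhd_G'G'.
apply: sum_lhd_of_lhdH le_GG' lhd_HH' _ => b b' eH eH' bb'.
apply: sum_lhd_of_lhdG lhd_GG' _ _ => [|a a' eG eG' aa'].
  by rewrite eH eH'; exact: gle_atoms.
by rewrite eG eG' eH eH'; exact: gsum_atoms_lhd.
Qed.

Lemma sum_le_le_step :
  gle leA G G' -> gle leB H H' -> gle leAB (gsum G H) (gsum G' H').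
Proof.
move=> le_GG' le_HH'; apply/gleP; split=> [Z | Z | atom].
- case/left_option_gsum=> [[X XG ->] | [Y YH ->]].
  + case/gleP: le_GG' => XG' _ _.
    exact: sum_lhd_le (IHG (or_introl XG)) (XG' X XG) le_HH'.
  + case/gleP: le_HH' => YH' _ _.
    exact: sum_le_lhd (IHH (or_introl YH)) le_GG' (YH' Y YH).
- case/right_option_gsum=> [[X XG' ->] | [Y YH' ->]].
  + case/gleP: le_GG' => _ GX _.
    exact: sum_lhd_le (IHG' (or_intror XG')) (GX X XG') le_HH'.
  + case/gleP: le_HH' => _ HY _.
    exact: sum_le_lhd (IHH' (or_intror YH')) le_GG' (HY Y YH').
- apply: sum_lhd_le_step le_HH'; case/gleP: le_GG' => _ _; apply.
  by case: atom => /is_atom_gsum [atomG _]; [left | right].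
Qed.

Lemma sum_step : sum_monotone_at G G' H H'.
Proof. exact: SumMonotoneAt sum_lhd_le_step sum_le_lhd_step sum_le_le_step. Qed.

End Step.

Lemma gsum_monotone G G' H H' :
  passable leA G -> passable leA G' -> passable leB H -> passable leB H' ->
  sum_monotone_at G G' H H'.
Proof.
move: G' H H'; elim/(well_founded_ind (@option_of_wf A)): G => G IHG G' H H'.
move: H H'; elim/(well_founded_ind (@option_of_wf A)): G' => G' IHG' H H'.
move: H'; elim/(well_founded_ind (@option_of_wf B)): H => H IHH H'.
elim/(well_founded_ind (@option_of_wf B)): H' => H' IHH' pG pG' pH pH'.
apply: sum_step (passable_lhd pG') (passable_lhd pH) _ _ _ _
  => [X XG | X XG' | Y YH | Y YH'].
- exact: IHG XG G' H H' (passable_option XG pG) pG' pH pH'.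
- exact: IHG' XG' H H' pG (passable_option XG' pG') pH pH'.
- exact: IHH YH H' pG pG' (passable_option YH pH) pH'.
- exact: IHH' YH' pG pG' pH (passable_option YH' pH').
Qed.

End Sum.

Theorem corollary8p5 (dA dB : Order.disp_t) (A : porderType dA) (B : porderType dB)
  (G G' : game A) (H H' : game B) :
  passable (<=%O) G -> passable (<=%O) G' ->
  passable (<=%O) H -> passable (<=%O) H' ->
  (glhd (<=%O) G G' -> gle (<=%O) H H' ->
     glhd (@prod_le dA dB A B) (gsum G H) (gsum G' H')) /\
  (gle (<=%O) G G' -> glhd (<=%O) H H' ->
     glhd (@prod_le dA dB A B) (gsum G H) (gsum G' H')) /\
  (gle (<=%O) G G' -> gle (<=%O) H H' ->
     gle (@prod_le dA dB A B) (gsum G H) (gsum G' H')) /\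
  (gequiv (<=%O) G G' -> gequiv (<=%O) H H' ->
     gequiv (@prod_le dA dB A B) (gsum G H) (gsum G' H')).
Proof.
move=> pG pG' pH pH'.
have leA_tr : transitive (<=%O : rel A) := @Order.POrderTheory.le_trans _ A.
have leB_tr : transitive (<=%O : rel B) := @Order.POrderTheory.le_trans _ B.
have prod_le_mono (a a' : A) (b b' : B) :
    (a <= a')%O -> (b <= b')%O -> prod_le (a, b) (a', b').
  by move=> aa' bb'; rewrite /prod_le /= aa' bb'.
have [lhd_le le_lhd le_le] := gsum_monotone leA_tr leB_tr prod_le_mono pG pG' pH pH'.
have [_ _ le_le'] := gsum_monotone leA_tr leB_tr prod_le_mono pG' pG pH' pH.
do 3!split=> //.
by move=> [GG' G'G] [HH' H'H]; split; [exact: le_le | exact: le_le'].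
Qed.
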